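(* Let $K$ be a skew field, $V$ a left (topological) $K$-vector space with basis $v^0,v^1,\ldots$, $V'$ the dual right $K$-vector space with basis $p_0,p_1,\ldots$, with pairing $(\cdot,\cdot)$; let $\mathbf f\in V$, $\mathbf g\in V'$, $y_i^k=(v^k,p_i)$, $f_i=(\mathbf f,p_i)$, $g^k=(v^k,\mathbf g)$, and assume $D=(y_i^k)$ generic. Then: (a) $(\Delta_R^m f)_{i_0\ldots i_m}^{k_0\ldots k_m}$ is symmetric with respect to $i_0,\ldots,i_m$ (invariant under any permutation of these indices) and with respect to $k_0,\ldots,k_{m-1}$. (b) $(\Delta_L^m g)_{i_0\ldots i_m}^{k_0\ldots k_m}$ is symmetric with respect to $k_0,\ldots,k_m$ and with respect to $i_0,\ldots,i_{m-1}$.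
   Context: The pairing $(\cdot,\cdot):V\times V'\to K$ is biadditive with $(\lambda v,p\mu)=\lambda(v,p)\mu$. $D$ is the infinite matrix with entry $y_i^k$ in row $k$, column $i$. Difference derivatives: for pairwise distinct $i_0,\ldots,i_m$ and pairwise distinct $k_0,\ldots,k_m$ (extended to permutations $i_0,i_1,\ldots$ and $k_0,k_1,\ldots$ of $\{0,1,\ldots\}$), for generic $D$ there are unique upper triangular $A=(a_m^j)$ and lower triangular $C=(c_l^m)$ such that $q_m=\sum_{j=0}^m p_{i_j}a_m^j$, $w^m=\sum_{l=0}^m c_l^m v^{k_l}$ satisfy $(w^m,q_{m'})=0$ for $m\ne m'$ and $(w^m,p_{i_m})=(v^{k_m},q_m)=1$ (equivalently, $q_m$ is the unique right combination of $p_{i_0},\ldots,p_{i_m}$ with $(v^{k_l},q_m)=\delta_{lm}$ for $l\le m$, and $w^m$ the unique left combination of $v^{k_0},\ldots,v^{k_m}$ with $(w^m,p_{i_j})=\delta_{jm}$ for $j\le m$). Define $(\Delta_R^m f)_{i_0\ldots i_m}^{k_0\ldots k_m}=\sum_j f_{i_j}a_m^j=(\mathbf f,q_m)$ and $(\Delta_L^m g)_{i_0\ldots i_m}^{k_0\ldots k_m}=\sum_l c_l^m g^{k_l}=(w^m,\mathbf g)$. Genericity means all finite square submatrices of $D$ that need to be inverted are invertible. *)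

From HB Require Import structures.
From mathcomp Require Import all_boot all_order fingroup perm all_algebra.
From Stdlib Require Import ClassicalEpsilon.
Set Implicit Arguments. Unset Strict Implicit. Unset Printing Implicit Defensive.
Import GRing.Theory.
Local Open Scope ring_scope.

Definition skew_field (K : unitRingType) : Prop :=
  forall x : K, x != 0 -> x \is a GRing.unit.

Definition invertible_mx (K : unitRingType) (n : nat) (A : 'M[K]_n) : Prop :=
  exists B : 'M[K]_n, A *m B = 1%:M /\ B *m A = 1%:M.

(* y k i = y_i^k = (v^k, p_i): entry of D in row k, column i.
   D is generic: every finite square submatrix (distinct rows, distinct columns)
   is invertible. *)
Definition generic (K : unitRingType) (y : nat -> nat -> K) : Prop :=
  forall (n : nat) (rows cols : 'I_n -> nat),
    injective rows -> injective cols ->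
    invertible_mx (\matrix_(a < n, b < n) y (rows a) (cols b)).

Definition subD (K : unitRingType) (y : nat -> nat -> K) (m : nat)
  (ii kk : 'I_m.+1 -> nat) : 'M[K]_m.+1 :=
  \matrix_(l < m.+1, j < m.+1) y (kk l) (ii j).

(* Coefficients a_m^j of q_m = sum_j p_{i_j} a_m^j, determined by
   (v^{k_l}, q_m) = sum_j y_{i_j}^{k_l} a_m^j = delta_{l m} for l <= m
   (the unique such column vector when D is generic). *)
Definition coefR (K : unitRingType) (y : nat -> nat -> K) (m : nat)
  (ii kk : 'I_m.+1 -> nat) : 'cV[K]_m.+1 :=
  epsilon (inhabits 0)
    (fun a : 'cV[K]_m.+1 => subD y ii kk *m a = delta_mx ord_max 0).

(* Coefficients c_l^m of w^m = sum_l c_l^m v^{k_l}, determined by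
   (w^m, p_{i_j}) = sum_l c_l^m y_{i_j}^{k_l} = delta_{j m} for j <= m. *)
Definition coefL (K : unitRingType) (y : nat -> nat -> K) (m : nat)
  (ii kk : 'I_m.+1 -> nat) : 'rV[K]_m.+1 :=
  epsilon (inhabits 0)
    (fun c : 'rV[K]_m.+1 => c *m subD y ii kk = delta_mx 0 ord_max).

Definition DeltaR (K : unitRingType) (y : nat -> nat -> K) (f : nat -> K) (m : nat)
  (ii kk : 'I_m.+1 -> nat) : K :=
  \sum_(j < m.+1) f (ii j) * coefR y ii kk j 0.

Definition DeltaL (K : unitRingType) (y : nat -> nat -> K) (g : nat -> K) (m : nat)
  (ii kk : 'I_m.+1 -> nat) : K :=
  \sum_(l < m.+1) coefL y ii kk 0 l * g (kk l).

(** The coefficient vectors are the solutions of [A a = e_m] and [c A = e_m^T],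
    where [A = (y_{i_j}^{k_l})] is invertible by genericity. Permuting the
    indices [i_j] permutes the columns of [A], i.e. multiplies it on the right
    by a permutation matrix, so the solution [a] is permuted the same way and
    [sum_j f_{i_j} a^j] only gets reindexed. Permuting the [k_l] multiplies [A]
    on the left by a permutation matrix; when the permutation fixes [m] it also
    fixes [e_m], so [a] does not change at all. The same two arguments, with
    rows and columns exchanged, give the symmetries of [Delta_L]. *)

From mathcomp Require Import all_boot all_order fingroup perm all_algebra.
From Stdlib Require Import ClassicalEpsilon.
Set Implicit Arguments. Unset Strict Implicit. Unset Printing Implicit Defensive.
Import GRing.Theory.
Local Open Scope ring_scope.

Section InvertibleMatrix.
Variables (R : unitRingType) (n : nat) (A : 'M[R]_n).
Hypothesis invA : invertible_mx A.

Lemma invertible_mx_solve_col p (b : 'M_(n, p)) : exists x, A *m x = b.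
Proof.
have [B [AB _]] := invA.
by exists (B *m b); rewrite mulmxA AB mul1mx.
Qed.

Lemma invertible_mx_solve_row p (b : 'M_(p, n)) : exists x, x *m A = b.
Proof.
have [B [_ BA]] := invA.
by exists (b *m B); rewrite -mulmxA BA mulmx1.
Qed.

Lemma invertible_mx_inj_col p : injective (fun x : 'M_(n, p) => A *m x).
Proof.
have [B [_ BA]] := invA.
by move=> x1 x2 /(congr1 (mulmx B)); rewrite !mulmxA BA !mul1mx.
Qed.

Lemma invertible_mx_inj_row p : injective (fun x : 'M_(p, n) => x *m A).
Proof.
have [B [AB _]] := invA.
by move=> x1 x2 /(congr1 (mulmx^~ B)); rewrite -!mulmxA AB !mulmx1.
Qed.

End InvertibleMatrix.

Lemma row_perm_delta (R : pzSemiRingType) m n (t : 'S_m) (i : 'I_m) (j : 'I_n) :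
  row_perm t (delta_mx i j) = delta_mx ((t^-1)%g i) j :> 'M[R]_(m, n).
Proof.
apply/matrixP=> a b; rewrite !mxE.
by rewrite -[in t a == i](permKV t i) (inj_eq perm_inj).
Qed.

Lemma col_perm_delta (R : pzSemiRingType) m n (s : 'S_n) (i : 'I_m) (j : 'I_n) :
  col_perm s (delta_mx i j) = delta_mx i ((s^-1)%g j) :> 'M[R]_(m, n).
Proof.
apply/matrixP=> a b; rewrite !mxE.
by rewrite -[in s b == j](permKV s j) (inj_eq perm_inj).
Qed.

Lemma perm_inv_fixed n (s : 'S_n) i : s i = i -> (s^-1)%g i = i.
Proof. by move=> si; rewrite -{1}si permK. Qed.

Section Coefficients.
Variables (K : unitRingType) (y : nat -> nat -> K).
Hypothesis hD : generic y.
Variables (m : nat) (ii kk : 'I_m.+1 -> nat).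
Hypotheses (hii : injective ii) (hkk : injective kk).

Lemma subD_invertible : invertible_mx (subD y ii kk).
Proof. exact: hD. Qed.

Lemma coefR_spec : subD y ii kk *m coefR y ii kk = delta_mx ord_max 0.
Proof.
exact: epsilon_spec (invertible_mx_solve_col subD_invertible _).
Qed.

Lemma coefR_eq a : subD y ii kk *m a = delta_mx ord_max 0 -> coefR y ii kk = a.
Proof. by rewrite -coefR_spec => /(invertible_mx_inj_col subD_invertible). Qed.

Lemma coefL_spec : coefL y ii kk *m subD y ii kk = delta_mx 0 ord_max.
Proof.
exact: epsilon_spec (invertible_mx_solve_row subD_invertible _).
Qed.

Lemma coefL_eq c : c *m subD y ii kk = delta_mx 0 ord_max -> coefL y ii kk = c.
Proof. by rewrite -coefL_spec => /(invertible_mx_inj_row subD_invertible). Qed.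

End Coefficients.

Lemma subD_perm_ii (K : unitRingType) (y : nat -> nat -> K) m ii kk (s : 'S_m.+1) :
  subD y (ii \o s) kk = col_perm s (subD y ii kk).
Proof. by apply/matrixP=> l j; rewrite !mxE. Qed.

Lemma subD_perm_kk (K : unitRingType) (y : nat -> nat -> K) m ii kk (t : 'S_m.+1) :
  subD y ii (kk \o t) = row_perm t (subD y ii kk).
Proof. by apply/matrixP=> l j; rewrite !mxE. Qed.

Section Symmetry.
Variables (K : unitRingType) (y : nat -> nat -> K).
Hypothesis hD : generic y.
Variables (m : nat) (ii kk : 'I_m.+1 -> nat).
Hypotheses (hii : injective ii) (hkk : injective kk).

Lemma coefR_perm_ii (s : 'S_m.+1) :
  coefR y (ii \o s) kk = row_perm s (coefR y ii kk).
Proof.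
apply: coefR_eq => //; first exact: inj_comp perm_inj.
rewrite subD_perm_ii col_permE row_permE -mulmxA (mulmxA (perm_mx _)).
by rewrite -perm_mxM mulVg perm_mx1 mul1mx coefR_spec.
Qed.

Lemma coefR_perm_kk (t : 'S_m.+1) :
  t ord_max = ord_max -> coefR y ii (kk \o t) = coefR y ii kk.
Proof.
move=> tmax; apply: coefR_eq => //; first exact: inj_comp perm_inj.
rewrite subD_perm_kk row_permE -mulmxA coefR_spec // -row_permE.
by rewrite row_perm_delta perm_inv_fixed.
Qed.

Lemma coefL_perm_kk (t : 'S_m.+1) :
  coefL y ii (kk \o t) = col_perm t (coefL y ii kk).
Proof.
apply: coefL_eq => //; first exact: inj_comp perm_inj.
rewrite subD_perm_kk col_permE row_permE -mulmxA (mulmxA (perm_mx _)).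
by rewrite -perm_mxM mulVg perm_mx1 mul1mx coefL_spec.
Qed.

Lemma coefL_perm_ii (s : 'S_m.+1) :
  s ord_max = ord_max -> coefL y (ii \o s) kk = coefL y ii kk.
Proof.
move=> smax; apply: coefL_eq => //; first exact: inj_comp perm_inj.
rewrite subD_perm_ii col_permE mulmxA coefL_spec // -col_permE.
by rewrite col_perm_delta perm_inv_fixed.
Qed.

Variables f g : nat -> K.

Lemma DeltaR_perm_ii (s : 'S_m.+1) : DeltaR y f (ii \o s) kk = DeltaR y f ii kk.
Proof.
rewrite /DeltaR coefR_perm_ii [RHS](reindex_inj (@perm_inj _ s)) /=.
by apply: eq_bigr => j _; rewrite mxE.
Qed.

Lemma DeltaR_perm_kk (t : 'S_m.+1) :
  t ord_max = ord_max -> DeltaR y f ii (kk \o t) = DeltaR y f ii kk.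
Proof. by move=> tmax; rewrite /DeltaR coefR_perm_kk. Qed.

Lemma DeltaL_perm_kk (t : 'S_m.+1) : DeltaL y g ii (kk \o t) = DeltaL y g ii kk.
Proof.
rewrite /DeltaL coefL_perm_kk [RHS](reindex_inj (@perm_inj _ t)) /=.
by apply: eq_bigr => l _; rewrite mxE.
Qed.

Lemma DeltaL_perm_ii (s : 'S_m.+1) :
  s ord_max = ord_max -> DeltaL y g (ii \o s) kk = DeltaL y g ii kk.
Proof. by move=> smax; rewrite /DeltaL coefL_perm_ii. Qed.

End Symmetry.

Theorem mainTheorem4 (K : unitRingType) (hK : skew_field K)
  (y : nat -> nat -> K) (f g : nat -> K) (hD : generic y)
  (m : nat) (ii kk : 'I_m.+1 -> nat)
  (hii : injective ii) (hkk : injective kk) :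
  (* (a) *)
  ((forall s : 'S_m.+1, DeltaR y f (ii \o s) kk = DeltaR y f ii kk) /\
   (forall t : 'S_m.+1, t ord_max = ord_max ->
      DeltaR y f ii (kk \o t) = DeltaR y f ii kk)) /\
  (* (b) *)
  ((forall t : 'S_m.+1, DeltaL y g ii (kk \o t) = DeltaL y g ii kk) /\
   (forall s : 'S_m.+1, s ord_max = ord_max ->
      DeltaL y g (ii \o s) kk = DeltaL y g ii kk)).
Proof.
split; split.
- exact: DeltaR_perm_ii.
- exact: DeltaR_perm_kk.
- exact: DeltaL_perm_kk.
- exact: DeltaL_perm_ii.
Qed.
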